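(* Let $\lambda<\kappa$ be infinite cardinals with $\mathrm{cf}(\lambda)>\omega$ and $\mathrm{cf}(\kappa)\ne\mathrm{cf}(\lambda)$. Then every $(\lambda,\kappa)$-graph contains a $(\lambda',\kappa)$-subgraph for some cardinal $\lambda'<\lambda$.
   Context: For infinite cardinals $\lambda<\kappa$, a $(\lambda,\kappa)$-graph is a bipartite graph with bipartition $(A,B)$, $|A|=\lambda$, $|B|=\kappa$, in which every vertex $b\in B$ has infinitely many neighbours in $A$. A $(\lambda',\kappa)$-subgraph of such a graph is a subgraph with bipartition $(C,D)$, $C\subseteq A$, $D\subseteq B$, which is itself a $(\lambda',\kappa)$-graph. *)

From HB Require Import structures.
From mathcomp Require Import all_boot all_order all_algebra.
From mathcomp Require Import boolp classical_sets functions cardinality.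
From Stdlib Require Import Relation_Definitions Wellfounded.

Set Implicit Arguments. Unset Strict Implicit. Unset Printing Implicit Defensive.
Local Open Scope classical_set_scope.
Local Open Scope card_scope.

Definition strict_wellorder (X : Type) (R : X -> X -> Prop) : Prop :=
  well_founded R /\
  (forall x y z, R x y -> R y z -> R x z) /\
  (forall x y, R x y \/ x = y \/ R y x).

(* R is a well-order of X of order type |X| (an initial ordinal):
   every proper initial segment has cardinality strictly less than |X|. *)
Definition initial_wellorder (X : Type) (R : X -> X -> Prop) : Prop :=
  strict_wellorder R /\
  forall x, ~ ([set: X] #<= [set y | R y x]).

Definition cofinal_in (X : Type) (R : X -> X -> Prop) (S : set X) : Prop :=
  forall x, exists s, S s /\ (x = s \/ R x s).

(* S witnesses the cofinality of the cardinal |X|: S is a cofinal subset of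
   minimal cardinality of the initial ordinal |X| (realised by R on X). *)
Definition cof_witness (X : Type) (S : set X) : Prop :=
  exists R : X -> X -> Prop, initial_wellorder R /\ cofinal_in R S /\
    forall S' : set X, cofinal_in R S' -> S #<= S'.

(* bipartite graph with sides A, B and edge relation E; a vertex b of B has
   infinitely many neighbours in C *)
Definition inf_nbrs (A B : Type) (E : A -> B -> Prop) (C : set A) (b : B) :=
  infinite_set [set a | C a /\ E a b].

From HB Require Import structures.
From mathcomp Require Import all_boot all_order all_algebra.
From mathcomp Require Import boolp classical_sets functions cardinality wochoice.
From Stdlib Require Import Wellfounded.

Set Implicit Arguments. Unset Strict Implicit. Unset Printing Implicit Defensive.
Local Open Scope classical_set_scope.
Local Open Scope card_scope.

(* Well-order A in type lambda.  Since cf(lambda) > omega, a countably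
   infinite set of neighbours of b is bounded, so b has infinitely many
   neighbours below some x(b) < lambda.  If kappa many b have x(b) <= y, the
   segment below y and these b form the subgraph.  Otherwise every fibre
   {b | x(b) <= y} is small, so ordering B lexicographically by (x(b), b) is a
   well-order of type kappa along which x is cofinal in lambda; a minimal
   cofinal subset of either order then maps onto a cofinal subset of the
   other, so cf(kappa) = cf(lambda).
   Minimal cofinal subsets exist because, by collapsing, every subset of a
   well-order is either as large as the whole order or equinumerous with a
   proper initial segment. *)

Lemma card_le_injfun T U (u : U) (A : set T) (B : set U) : A #<= B ->
  exists f : T -> U, (forall t, A t -> B (f t)) /\ {in A &, injective f}.
Proof.
elim/Ppointed: U => U in u B *; first by case: (no u).
move/pcard_leP => -[f]; exists f.
by split; [move=> t At; apply: funS | exact: inj].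
Qed.

Lemma injfun_card_le T U (A : set T) (B : set U) (f : T -> U) :
  (forall t, A t -> B (f t)) -> {in A &, injective f} -> A #<= B.
Proof.
move=> fAB f_inj; apply: (card_le_trans (B := f @` A)).
  by have /card_eqPle[] := card_esym (inj_card_eq f_inj).
by apply: subset_card_le => _ [t At <-]; apply: fAB.
Qed.

Definition min_cofinal (X : Type) (R : X -> X -> Prop) (S : set X) : Prop :=
  cofinal_in R S /\ forall S' : set X, cofinal_in R S' -> S #<= S'.

Section StrictWellorder.
Variables (X : Type) (R : X -> X -> Prop).
Hypothesis HR : strict_wellorder R.

Lemma strict_wo_wf : well_founded R. Proof. by case: HR. Qed.

Lemma strict_wo_trans x y z : R x y -> R y z -> R x z.
Proof. by case: HR => _ [+ _]; apply. Qed.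

Lemma strict_wo_total x y : R x y \/ x = y \/ R y x.
Proof. by case: HR => _ [_]; apply. Qed.

Lemma strict_wo_irrefl x : ~ R x x.
Proof. by elim: (strict_wo_wf x) => y _ IH Ryy; apply: (IH y Ryy Ryy). Qed.

Lemma strict_wo_le_lt x y z : x = y \/ R x y -> R y z -> R x z.
Proof. by case=> [->//|]; apply: strict_wo_trans. Qed.

Lemma strict_wo_lt_le x y z : R x y -> y = z \/ R y z -> R x z.
Proof. by move=> Rxy [<-//|]; apply: strict_wo_trans. Qed.

Lemma strict_wo_min (P : set X) : (exists x, P x) ->
  exists m, P m /\ forall z, P z -> ~ R z m.
Proof.
move=> [x Px]; apply: contrapT => nomin; move: Px.
elim: (strict_wo_wf x) => {}x _ IH Px; apply: nomin; exists x.
by split=> // z Pz Rzx; apply: IH Rzx Pz.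
Qed.

Definition least (P : set X) (d : X) : X :=
  if pselect (exists m, P m /\ forall z, P z -> ~ R z m) is left e
  then proj1_sig (cid e) else d.

Lemma leastP P d : (exists x, P x) ->
  P (least P d) /\ forall z, P z -> ~ R z (least P d).
Proof.
move=> /strict_wo_min ex; rewrite /least; case: pselect => // e.
exact: proj2_sig (cid e).
Qed.

Section Collapse.
Variable S : set X.

(* Mostowski collapse of [S] onto an initial segment of [X]. *)
Definition collapse_step (s : X) (rec : forall s', R s' s -> X) : X :=
  least [set z | ~ exists s' (p : R s' s), S s' /\ rec s' p = z] s.

Definition collapse : X -> X := Fix strict_wo_wf (fun _ => X) collapse_step.

Definition unused (s : X) : set X :=
  [set z | ~ exists s', R s' s /\ S s' /\ collapse s' = z].

Lemma collapseE s : collapse s = least (unused s) s.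
Proof.
rewrite /collapse Fix_eq /collapse_step; last first.
  move=> s' f g fg; congr least; apply/funext => z; apply/propext.
  by split=> H [t [p [St e]]]; apply: H; exists t, p; rewrite ?fg// -fg.
congr least; apply/funext => z; apply/propext.
by split=> H [t [p [St e]]]; apply: H; exists t; [exists p | ].
Qed.

Lemma collapse_least s : unused s s ->
  unused s (collapse s) /\ forall z, unused s z -> ~ R z (collapse s).
Proof. by move=> Us; rewrite collapseE; apply: leastP; exists s. Qed.

Lemma unused_self s : S s -> unused s s.
Proof.
elim: (strict_wo_wf s) => {}s _ IH Ss [t [Rts [St ets]]].
have Utt := IH t Rts St.
have [_ tmin] := collapse_least Utt.
by rewrite ets in tmin; apply: tmin Utt Rts.
Qed.

Lemma collapse_new s t : S s -> R t s -> S t -> collapse t <> collapse s.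
Proof.
move=> Ss Rts St e; have [Ucs _] := collapse_least (unused_self Ss).
by apply: Ucs; exists t.
Qed.

Lemma collapse_inj : {in S &, injective collapse}.
Proof.
move=> s t; rewrite !in_setE => Ss St e.
have [Rst|[//|Rts]] := strict_wo_total s t.
  by case: (collapse_new St Rst Ss).
by case: (collapse_new Ss Rts St).
Qed.

Lemma collapse_down s z : S s -> R z (collapse s) -> (collapse @` S) z.
Proof.
move=> Ss Rz; have [_ csmin] := collapse_least (unused_self Ss).
apply: contrapT => notim; apply: (csmin z) => // -[t [_ [St ctz]]].
by apply: notim; exists t.
Qed.

End Collapse.

Lemma subset_card_segment (S : set X) :
  [set: X] #<= S \/ exists y, S #= [set z | R z y].
Proof.
have imS : collapse S @` S #= S := inj_card_eq (@collapse_inj S).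
have [[y ny]|onto] := pselect (exists y, ~ (collapse S @` S) y); last first.
  left; rewrite -(card_le_eqr imS).
  by apply: subset_card_le => y _; apply: contrapT => ny; apply: onto; exists y.
have [y0 [ny0 y0min]] :=
  strict_wo_min (P := ~` (collapse S @` S)) (ex_intro _ y ny).
right; exists y0; rewrite -(card_eql imS).
suff -> : collapse S @` S = [set z | R z y0] by apply: card_eqxx.
apply/seteqP; split=> z; last first.
  by move=> /= Rz; apply: contrapT => nz; apply: y0min nz Rz.
move=> [s Ss <-]; have [//|[ey0|Ry0]] := strict_wo_total (collapse S s) y0.
  by rewrite -ey0 in ny0; case: ny0; exists s.
by case: ny0; apply: collapse_down Ss Ry0.
Qed.

Lemma exists_min_cofinal : exists S, min_cofinal R S.
Proof.
pose fits y := exists S : set X, cofinal_in R S /\ S #<= [set z | R z y].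
have [[y1 fy1]|nofit] := pselect (exists y, fits y); last first.
  exists [set: X]; split=> [x|S cofS]; first by exists x; split=> //; left.
  case: (subset_card_segment S) => // -[y Sy]; case: nofit; exists y, S.
  by split=> //; have /card_eqPle[] := Sy.
have [y0 [[S0 [cofS0 S0y0]] y0min]] :=
  strict_wo_min (P := fits) (ex_intro _ y1 fy1).
exists S0; split=> // S cofS.
case: (subset_card_segment S) => [XS|[y Sy]].
  exact: card_le_trans (card_leT _) XS.
have nRyy0 : ~ R y y0.
  by apply: y0min; exists S; split=> //; have /card_eqPle[] := Sy.
apply: (card_le_trans S0y0); rewrite (card_le_eqr Sy).
apply: subset_card_le => z /= Rzy0.
have [Ry0y|[<-//|Ryy0]] := strict_wo_total y0 y.
  exact: strict_wo_trans Rzy0 Ry0y.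
by case: nRyy0.
Qed.

Lemma min_cofinal_countable_bounded S : min_cofinal R S -> ~ countable S ->
  forall N : set X, countable N -> exists y, forall a, N a -> R a y.
Proof.
move=> [_ Smin] Sunc N cN; apply: contrapT => unbdd.
apply/Sunc/(card_le_trans _ cN)/Smin => y; apply: contrapT => noN.
apply: unbdd; exists y => a Na; case: (strict_wo_total a y) => [//|[ay|Rya]].
  by case: noN; exists a; split=> //; left.
by case: noN; exists a; split=> //; right.
Qed.

End StrictWellorder.

Lemma infinite_bounded_subset X (R : X -> X -> Prop) (N : set X) :
  (forall M : set X, countable M -> exists y, forall a, M a -> R a y) ->
  infinite_set N -> exists y, infinite_set [set a | R a y /\ N a].
Proof.
move=> bounded Ninf; have [a0 _] := infinite_setN0 Ninf.
have [f [fN f_inj]] := card_le_injfun a0 (iffLR (infiniteP N) Ninf).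
have [y fy] := bounded (f @` setT) (card_image_le f setT).
exists y; apply/infiniteP/(injfun_card_le (f := f)) => // n _.
by split; [apply: fy; exists n | apply: fN].
Qed.

Definition lex_comap X Y (R : X -> X -> Prop) (W : Y -> Y -> Prop)
    (x : Y -> X) (b b' : Y) : Prop :=
  R (x b) (x b') \/ x b = x b' /\ W b b'.

Section LexComap.
Variables (X Y : Type) (R : X -> X -> Prop) (W : Y -> Y -> Prop) (x : Y -> X).
Hypotheses (HR : strict_wellorder R) (HW : strict_wellorder W).

Lemma lex_comap_strict_wellorder : strict_wellorder (lex_comap R W x).
Proof.
split; [|split].
- suff acc a b : x b = a -> Acc (lex_comap R W x) b by move=> b; apply: acc erefl.
  elim: (strict_wo_wf HR a) b => {}a _ IHa b.
  elim: (strict_wo_wf HW b) => {}b _ IHb xba.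
  constructor=> b' [Rb'b|[eb' Wb'b]]; first by apply: IHa erefl; rewrite -xba.
  by apply: IHb; rewrite ?eb'.
- move=> b1 b2 b3 [R12|[e12 W12]] [R23|[e23 W23]].
  + by left; apply: (strict_wo_trans HR R12 R23).
  + by left; rewrite -e23.
  + by left; rewrite e12.
  + by right; split; [rewrite e12 | apply: (strict_wo_trans HW W12 W23)].
- move=> b b'; have [|[e|]] := strict_wo_total HR (x b) (x b').
  + by left; left.
  + have [|[|]] := strict_wo_total HW b b'.
    * by left; right.
    * by right; left.
    * by right; right; right.
  + by right; right; left.
Qed.

Lemma lex_comap_initial :
  (forall a, ~ ([set: Y] #<= [set b | x b = a \/ R (x b) a])) ->
  initial_wellorder (lex_comap R W x).
Proof.
move=> small; split=> [|b Yb]; first exact: lex_comap_strict_wellorder.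
apply: (small (x b)); apply: card_le_trans Yb _.
by apply: subset_card_le => b' [Rb'b|[eb' _]]; [right | left].
Qed.

End LexComap.

Lemma well_order_strict (T : eqType) (W : rel T) :
  well_order W -> strict_wellorder (fun x y => W x y /\ x <> y).
Proof.
move=> Wwo; have Wchain : wo_chain W predT by apply: withinW.
have Wtotal : total W by move=> x y; apply: (wo_chainW Wchain isT isT).
have Wanti : antisymmetric W.
  by move=> x y; apply: (wo_chain_antisymmetric Wchain isT isT).
have Wmin (P : set T) :
    (exists t, P t) -> exists m, P m /\ forall t, P t -> W m t.
  move=> [t Pt]; have [|m [[Pm mlb] _]] := Wwo [pred w | `[< P w >]].
    by exists t; rewrite inE.
  exists m; split; first by move: Pm; rewrite inE.
  by move=> w Pw; apply: mlb; rewrite inE.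
have Wtrans : transitive W.
  move=> y x z Wxy Wyz.
  have [m [mxyz mlb]] :=
    Wmin [set w | w = x \/ w = y \/ w = z] (ex_intro _ x (or_introl erefl)).
  case: mxyz => [<-|[eym|ezm]]; first by apply: mlb; right; right.
  - have exy : x = y by apply: Wanti; rewrite Wxy -eym mlb //; left.
    by rewrite exy.
  - have eyz : y = z by apply: Wanti; rewrite Wyz -ezm mlb //; right; left.
    by rewrite -eyz.
split; [|split].
- move=> x; apply: contrapT => nacc.
  have [m [nm mlb]] := Wmin [set w | ~ Acc _ w] (ex_intro _ x nacc).
  apply: nm; constructor=> y [Wym ym]; apply: contrapT => nacc_y.
  by apply/ym/Wanti; rewrite Wym mlb.
- move=> x y z [Wxy _] [Wyz nyz]; split; first exact: Wtrans Wxy Wyz.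
  by move=> exz; rewrite -exz in Wyz nyz; apply/nyz/Wanti; rewrite Wxy Wyz.
- move=> x y; have [->|nxy] := eqVneq x y; first by right; left.
  case/orP: (Wtotal x y) => [Wxy|Wyx]; first by left; split=> //; apply/eqP.
  by right; right; split=> //; apply/eqP; rewrite eq_sym.
Qed.

Lemma exists_strict_wellorder X : exists R : X -> X -> Prop, strict_wellorder R.
Proof.
have [W Wwo] := well_ordering_principle {classic X}.
by exists (fun x y => W x y /\ x <> y); apply: well_order_strict Wwo.
Qed.

(* Transport a well-order along an injection into its shortest initial segment
   that is as large as the whole type. *)
Lemma exists_initial_wellorder X :
  exists R : X -> X -> Prop, initial_wellorder R.
Proof.
have [W HW] := exists_strict_wellorder X.
pose large y := [set: X] #<= [set z | W z y].
have [[y Xy]|nolarge] := pselect (exists y, large y); last first.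
  by exists W; split=> // y Xy; apply: nolarge; exists y.
have [y0 [Xy0 y0min]] := strict_wo_min HW (P := large) (ex_intro _ y Xy).
have [f [fy0 f_inj]] := card_le_injfun y0 Xy0.
have {}f_inj : injective f by move=> a b; apply: f_inj; rewrite in_setE.
exists (fun a b => W (f a) (f b)); split; [split; [|split]|].
- exact: wf_inverse_image (strict_wo_wf HW).
- by move=> a b c; apply: (strict_wo_trans HW).
- move=> a b; have [|[/f_inj|]] := strict_wo_total HW (f a) (f b).
  + by left.
  + by right; left.
  + by right; right.
- move=> a Xa; apply: (y0min (f a)) (fy0 a I).
  apply: (card_le_trans Xa); apply: (injfun_card_le (f := f)) => [//|b c _ _].
  exact: f_inj.
Qed.

Lemma min_cofinal_card_eq X Y (R : X -> X -> Prop) (Q : Y -> Y -> Prop)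
    (S : set X) (T : set Y) (x : Y -> X) :
  strict_wellorder R -> strict_wellorder Q ->
  min_cofinal R S -> min_cofinal Q T ->
  (forall b b', R (x b) (x b') -> Q b b') -> (forall a, exists b, R a (x b)) ->
  S #= T.
Proof.
move=> HR HQ [cofS Smin] [cofT Tmin] x_refl x_unbdd.
have x_mono b b' : Q b b' -> x b = x b' \/ R (x b) (x b').
  move=> Qbb'; have [|[|Rb'b]] := strict_wo_total HR (x b) (x b').
  - by right.
  - by left.
  - by case: (strict_wo_irrefl HQ (strict_wo_trans HQ Qbb' (x_refl _ _ Rb'b))).
have [g gP] := choice x_unbdd.
apply/card_eqPle; split.
- apply: (card_le_trans (Smin (x @` T) _) (card_image_le x T)) => a.
  have [b Rab] := x_unbdd a; have [t [Tt bt]] := cofT b.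
  exists (x t); split; first by exists t.
  right; apply: (strict_wo_lt_le HR Rab).
  by case: bt => [<-|/x_mono]; [left|].
- apply: (card_le_trans (Tmin (g @` S) _) (card_image_le g S)) => b.
  have [s [Ss xbs]] := cofS (x b).
  exists (g s); split; first by exists s.
  by right; apply/x_refl/(strict_wo_le_lt HR xbs).
Qed.

Theorem lemma4p1 (A B : Type) (E : A -> B -> Prop)
  (* lambda = |A| infinite, lambda < kappa = |B| *)
  (hAinf : infinite_set [set: A])
  (hAB : [set: A] #<= [set: B]) (hBA : ~ ([set: B] #<= [set: A]))
  (* (lambda,kappa)-graph: every b in B has infinitely many neighbours in A *)
  (hgraph : forall b : B, inf_nbrs E [set: A] b)
  (* cf(lambda) > omega *)
  (hcfA : forall S : set A, cof_witness S -> ~ countable S)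
  (* cf(kappa) <> cf(lambda) *)
  (hcf : forall (S : set A) (T : set B), cof_witness S -> cof_witness T ->
           ~ (S #= T)) :
  exists (C : set A) (D : set B),
    ~ ([set: A] #<= C) /\ D #= [set: B] /\
    forall b, D b -> inf_nbrs E C b.
Proof.
have [RA iRA] := exists_initial_wellorder A.
have HRA : strict_wellorder RA by case: iRA.
have [SA minSA] := exists_min_cofinal HRA.
have cofSA : cof_witness SA by exists RA.
have bounded := min_cofinal_countable_bounded HRA minSA (hcfA SA cofSA).
have /choice[x xE] : forall b, exists y, inf_nbrs E [set a | RA a y] b.
  move=> b; have [y yE] := infinite_bounded_subset bounded (hgraph b).
  by exists y; apply: sub_infinite_set yE => a [Ray [_ Eab]].
pose below y := [set b | x b = y \/ RA (x b) y].
have [[y By]|small] := pselect (exists y, [set: B] #<= below y).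
  exists [set a | RA a y], (below y); split; first by case: iRA.
  split; first by apply/card_eqPle; split; [apply: card_leT|].
  move=> b yb; apply: sub_infinite_set (xE b) => a [Rab Eab].
  by split=> //; apply: (strict_wo_lt_le HRA Rab).
have [W HW] := exists_strict_wellorder B.
have iRB : initial_wellorder (lex_comap RA W x).
  by apply: lex_comap_initial => // a Ba; apply: small; exists a.
have [TB minTB] := exists_min_cofinal iRB.1.
have cofTB : cof_witness TB by exists (lex_comap RA W x).
case: (hcf SA TB cofSA cofTB).
apply: (min_cofinal_card_eq (x := x) HRA iRB.1 minSA minTB).
  by move=> b b' Rbb'; left.
move=> a; apply: contrapT => bdd; apply: small; exists a.
apply: subset_card_le => b _; have [Rab|[eab|Rba]] := strict_wo_total HRA a (x b).
- by case: bdd; exists b.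
- by left.
- by right.
Qed.
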